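(* Let $k\ge 1$ and let $G=K_{n_1,n_2,\dots,n_p}$ be a complete $p$-partite graph with $\delta(G)\ge k$ and $n_1\le n_2\le\dots\le n_p$. Suppose the set \[ M=\{x\in\mathbb{Z}_{>0} : \text{there is an integer } \ell \text{ with } 2\le \ell\le p,\ (\ell-1)x=k,\ x\le\min\{k,n_1,\dots,n_\ell\}\} \] is nonempty. Then $\gamma_{\times k,t}(G)\le k+\min M$.
   Context: A set $S\subseteq V(G)$ is a $k$-tuple total dominating set ($k$TDS) of a graph $G$ with $\delta(G)\ge k$ if $|N_G(x)\cap S|\ge k$ for every $x\in V(G)$. The $k$-tuple total domination number $\gamma_{\times k,t}(G)$ is the minimum cardinality of a $k$TDS of $G$. $K_{n_1,\dots,n_p}$ denotes the complete $p$-partite graph with parts of sizes $n_1,\dots,n_p$. *)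

From mathcomp Require Import all_boot.
Set Implicit Arguments. Unset Strict Implicit. Unset Printing Implicit Defensive.

Definition nbhd (T : finType) (e : rel T) (x : T) : {set T} := [set y | e x y].

Definition min_deg_ge (T : finType) (e : rel T) (k : nat) : Prop :=
  forall x : T, k <= #|nbhd e x|.

Definition kTDS (T : finType) (e : rel T) (k : nat) (S : {set T}) : bool :=
  [forall x, k <= #|nbhd e x :&: S|].

(* k-tuple total domination number: minimum cardinality of a kTDS
   (defaults to #|T| when none exists; under min degree >= k, setT is one). *)
Definition ktdn (T : finType) (e : rel T) (k : nat) : nat :=
  \big[minn/#|T|]_(S : {set T} | kTDS e k S) #|S|.

(* Complete p-partite graph K_{n_1,...,n_p}: vertex (i, j) is the j-th vertex
   of part i (parts indexed 0..p-1); two vertices adjacent iff in different parts. *)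
Definition cmp_vertex (p : nat) (n : 'I_p -> nat) : finType :=
  {i : 'I_p & 'I_(n i)}.

Definition cmp_adj (p : nat) (n : 'I_p -> nat) : rel (cmp_vertex n) :=
  fun u v => tag u != tag v.

(* Membership in M: x > 0 and there is l with 2 <= l <= p, (l-1) x = k,
   x <= min{k, n_1, ..., n_l}  (n_1..n_l are the parts with 0-based index < l). *)
Definition inM (p : nat) (n : 'I_p -> nat) (k x : nat) : bool :=
  (0 < x) &&
  [exists l : 'I_p.+1,
     [&& 2 <= l, (l.-1 * x == k), x <= k &
         [forall i : 'I_p, (i < l) ==> (x <= n i)]]].

(* min M (elements of M are at most k). *)
Definition minM (p : nat) (n : 'I_p -> nat) (k : nat) : nat :=
  \big[minn/k]_(x < k.+1 | inM n k x) x.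

(** Take the first [x] vertices of each of the [l] smallest parts.  A vertex
    sees every chosen vertex outside its own part, hence at least
    [(l - 1) x = k] of them, and [l x = k + x] vertices are chosen. *)

From mathcomp Require Import all_boot all_order.
Set Implicit Arguments. Unset Strict Implicit. Unset Printing Implicit Defensive.

Import Order.TTheory.

Lemma ktdn_le_card (T : finType) (e : rel T) (k : nat) (S : {set T}) :
  kTDS e k S -> ktdn e k <= #|S|.
Proof. exact: (bigmin_le_cond #|T| (fun S : {set T} => #|S|)). Qed.

Lemma card_ord_ltn (m x : nat) : x <= m -> #|[set j : 'I_m | j < x]| = x.
Proof.
move=> le_xm; rewrite -sum1_card.
rewrite (eq_bigl (fun j : 'I_m => true && (j < x))); last by move=> j; rewrite inE.
by rewrite (big_ord_narrow_cond le_xm) sum1_card card_ord.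
Qed.

Section CompleteMultipartite.

Variables (p : nat) (n : 'I_p -> nat).

Definition cmp_block (A : {set 'I_p}) (x : nat) : {set cmp_vertex n} :=
  [set w : cmp_vertex n | (tag w \in A) && (tagged w < x)].

Lemma card_cmp_block (A : {set 'I_p}) (x : nat) :
  (forall i, i \in A -> x <= n i) -> #|cmp_block A x| = #|A| * x.
Proof.
move=> le_x; rewrite -sum1_card.
rewrite (eq_bigl (fun w : cmp_vertex n => (tag w \in A) && (tagged w < x)));
  last by move=> w; rewrite inE.
rewrite -(sig_big_dep (fun i => i \in A) (fun i (j : 'I_(n i)) => j < x)
           (fun _ _ => 1)) /=.
rewrite (eq_bigr (fun _ => x)) ?sum_nat_const // => i iA.
rewrite sum1_card -[RHS](card_ord_ltn (le_x i iA)).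
by apply: eq_card => j; rewrite inE.
Qed.

Lemma nbhd_cmp_block (A : {set 'I_p}) (x : nat) (v : cmp_vertex n) :
  nbhd (@cmp_adj p n) v :&: cmp_block A x = cmp_block (A :\ tag v) x.
Proof.
apply/setP=> w; rewrite !inE /cmp_adj eq_sym.
by case: (tag w != tag v); rewrite ?andbF.
Qed.

Lemma cmp_block_kTDS (A : {set 'I_p}) (x k : nat) :
  (forall i, i \in A -> x <= n i) -> k <= #|A|.-1 * x ->
  kTDS (@cmp_adj p n) k (cmp_block A x).
Proof.
move=> le_x le_k; apply/forallP=> v.
rewrite nbhd_cmp_block card_cmp_block; last first.
  by move=> i /setD1P[_]; exact: le_x.
apply: (leq_trans le_k); rewrite leq_mul2r (cardsD1 (tag v) A).
by case: (tag v \in A) => /=; rewrite add0n ?leq_pred ?leqnn orbT.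
Qed.

Lemma ktdn_le_inM (k x : nat) : inM n k x -> ktdn (@cmp_adj p n) k <= k + x.
Proof.
case/andP=> _ /existsP[l /and4P[l_ge2 /eqP def_k _ /forallP le_x]].
pose A := [set i : 'I_p | i < l].
have card_A : #|A| = l by rewrite card_ord_ltn ?leq_ord.
have le_xA i : i \in A -> x <= n i by rewrite inE; apply/implyP.
apply: leq_trans (ktdn_le_card (cmp_block_kTDS le_xA _)) _.
  by rewrite card_A def_k.
by rewrite card_cmp_block // card_A -def_k -{1}(prednK (ltnW l_ge2)) mulSn addnC.
Qed.

Lemma inM_le (k x : nat) : inM n k x -> x <= k.
Proof. by case/andP=> _ /existsP[l /and4P[]]. Qed.

Lemma minM_inM (k : nat) : (exists x, inM n k x) -> inM n k (minM n k).
Proof.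
case=> x Mx; have le_xk := inM_le Mx.
have Mj : inM n k (@inord k x) by rewrite inordK.
rewrite /minM (bigmin_eq_arg k (inord x) (fun j => inM n k j)) //;
  last by move=> j _; exact: leq_ord.
by case: arg_minP.
Qed.

End CompleteMultipartite.

Theorem mainTheorem5 (p : nat) (n : 'I_p -> nat) (k : nat) :
  1 <= k ->
  (forall i : 'I_p, 0 < n i) ->
  (forall i j : 'I_p, i <= j -> n i <= n j) ->
  min_deg_ge (@cmp_adj p n) k ->
  (exists x, inM n k x) ->
  ktdn (@cmp_adj p n) k <= k + minM n k.
Proof.
(* Only M being nonempty matters: [inM] itself records that [x] fits in the
   parts it uses, so positivity, sortedness and the degree bound are unused. *)
by move=> _ _ _ _ /minM_inM; exact: ktdn_le_inM.
Qed.
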